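(* There exist universal constants $c,c'>0$ such that for all integers $d\ge1$ and $k$ with $d$ dividing $k-1$, the Octopus graph $G_{k,d}$ satisfies $c/d^2\le\lambda_2\le c'/d^2$, where $\lambda_2$ is the second-smallest eigenvalue of its Laplacian; i.e. $\lambda_2=\Theta(1/d^2)$.
   Context: Octopus graph $G_{k,d}$: for nodes $i<j$ in $\{1,\dots,k\}$, $\{i,j\}$ is an edge iff either ($j=k$ and $i\equiv1\pmod d$) or ($j\ne k$, $j=i+1$ and $i\not\equiv0\pmod d$). Thus node $k$ is a centre from which $(k-1)/d$ paths of $d$ nodes each emanate. The Laplacian has diagonal entries equal to degrees and $-1$ for adjacent pairs, $0$ otherwise. *)

From HB Require Import structures.
From mathcomp Require Import all_boot all_order all_algebra.
From mathcomp Require Import reals.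
Set Implicit Arguments. Unset Strict Implicit. Unset Printing Implicit Defensive.
Import Order.TTheory GRing.Theory Num.Theory.
Local Open Scope ring_scope.

(* Edge condition of the Octopus graph G_{k,d} on nodes 1..k, for a < b
   (1-based labels): {a,b} is an edge iff
   (b = k and a = 1 mod d) or (b <> k, b = a+1 and a <> 0 mod d). *)
Definition octo_cond (k d a b : nat) : bool :=
  ((b == k) && (a %% d == 1 %% d)%N) ||
  ((b != k) && (b == a.+1) && (a %% d != 0)%N).

Definition octo_adj (k d : nat) (i j : 'I_k) : bool :=
  let a := i.+1 in let b := j.+1 in
  ((a < b)%N && octo_cond k d a b) || ((b < a)%N && octo_cond k d b a).

Arguments octo_adj : clear implicits.
Definition octo_deg (k d : nat) (i : 'I_k) : nat := #|[set j | octo_adj k d i j]|.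

Arguments octo_deg : clear implicits.
Definition octo_laplacian (R : nzRingType) (k d : nat) : 'M[R]_k :=
  \matrix_(i, j) (if i == j then (octo_deg k d i)%:R
                  else if octo_adj k d i j then -1 else 0).

Definition sorted_spectrum (R : numFieldType) (n : nat) (A : 'M[R]_n)
  (s : seq R) : Prop :=
  sorted <=%R s /\ char_poly A = \prod_(x <- s) ('X - x%:P).

From HB Require Import structures.
From mathcomp Require Import all_boot all_order all_algebra.
From mathcomp Require Import reals complex.
From mathcomp Require Import ring lra zify.
Import Order.TTheory GRing.Theory Num.Theory.
Set Implicit Arguments. Unset Strict Implicit. Unset Printing Implicit Defensive.

(* The octopus is a tree rooted at its centre, so its Laplacian form is
   x^T L x = sum over non-central v of (x_v - x_(parent v))^2, and by
   Courant-Fischer lambda_2 is the minimum of x^T L x / |x|^2 over x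
   orthogonal to the constants.
   Lower bound: for such x, |x|^2 <= |x - x_centre|^2, and on each leg
   telescoping from the centre and Cauchy-Schwarz bound the leg's share by
   d^2 times the energy of the leg's edges; hence lambda_2 >= 1/d^2.
   Upper bound: the distance to the centre along one leg, minus its mean,
   has energy d and squared norm at least d^3/12; hence lambda_2 <= 12/d^2. *)

(* Node [i] of [octo_adj k'.+1 d] is node [i+1] of the paper: the centre is
   [k'], the legs are the blocks [l*d, ..., l*d + d - 1], and every other
   node [i < k'] hangs from [octo_parent k' d i]. *)
Definition octo_parent (k' d i : nat) : nat := if i %% d == 0 then k' else i.-1.

Lemma modSn_eq1 d i : (i.+1 %% d == 1 %% d) = (i %% d == 0).
Proof. by rewrite -addn1 -(add0n 1) eqn_modDr mod0n. Qed.

Lemma modn_neq0_gt0 d i : i %% d != 0 -> 0 < i.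
Proof. by case: i => //; rewrite mod0n. Qed.

Lemma octo_cond_parent k' d i j : 0 < d -> i < j -> j <= k' ->
  octo_cond k'.+1 d i.+1 j.+1 =
  ((i < k') && (j == octo_parent k' d i)) || ((j < k') && (i == octo_parent k' d j)).
Proof.
move=> d_gt0 lt_ij le_jk; rewrite /octo_cond /octo_parent !eqSS modSn_eq1.
have := @modn_neq0_gt0 d i; have [-> | ne_ji] := eqVneq j i.+1.
  by case: (i %% d == 0); case: (i.+1 %% d == 0) => /=; lia.
by case: (i %% d == 0); case: (j %% d == 0) => /=; lia.
Qed.

Lemma octo_adjE k' d (i j : 'I_k'.+1) : 0 < d ->
  octo_adj k'.+1 d i j =
  ((i < k') && (val j == octo_parent k' d i)) || ((j < k') && (val i == octo_parent k' d j)).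
Proof.
move=> d_gt0; rewrite /octo_adj /=.
have := ltn_ord i; have := ltn_ord j; rewrite !ltnS => le_jk le_ik.
case: (ltngtP i j) => [lt_ij | lt_ji | eq_ij].
- by rewrite (octo_cond_parent d_gt0 lt_ij le_jk) /= orbF.
- by rewrite (octo_cond_parent d_gt0 lt_ji le_ik) /= orbC.
- rewrite eq_ij /= /octo_parent; have := @modn_neq0_gt0 d j.
  by case: (j %% d == 0) => /=; lia.
Qed.

Lemma octo_parent_le k' d i : i <= k' -> octo_parent k' d i <= k'.
Proof. by rewrite /octo_parent; case: ifP => _; lia. Qed.

Lemma octo_parent_neq k' d i : i < k' -> octo_parent k' d i != i.
Proof. by rewrite /octo_parent; have := @modn_neq0_gt0 d i; case: ifP => _; lia. Qed.

Lemma octo_parent_no_2cycle k' d i : i < k' -> octo_parent k' d i < k' ->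
  octo_parent k' d (octo_parent k' d i) != i.
Proof.
rewrite /octo_parent; have := @modn_neq0_gt0 d i.
by case: (i %% d == 0); case: (i.-1 %% d == 0) => /=; lia.
Qed.

Lemma octo_parent_leg m d l p : p < d ->
  octo_parent (m * d) d (l * d + p) = if p is p'.+1 then l * d + p' else m * d.
Proof.
move=> lt_pd; rewrite /octo_parent modnMDl modn_small //.
by case: p lt_pd => [|p] //= _; rewrite addnS.
Qed.

Local Open Scope ring_scope.

Lemma char_poly_conj (R : comUnitRingType) n (Q P D : 'M[R]_n) :
  Q *m P = 1%:M -> char_poly (Q *m D *m P) = char_poly D.
Proof.
move=> QP; rewrite /char_poly /char_poly_mx.
have eX : ('X%:M : 'M[{poly R}]_n) =
          map_mx (@polyC R) Q *m 'X%:M *m map_mx (@polyC R) P.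
  by rewrite scalar_mxC -mulmxA -map_mxM QP map_mx1 mulmx1.
rewrite !map_mxM {1}eX -mulmxBl -mulmxBr !det_mulmx mulrAC -det_mulmx.
by rewrite -map_mxM QP map_mx1 det1 mul1r.
Qed.

Lemma nontrivial_comb2 (R : comNzRingType) (x y : R) :
  exists a b : R, ((a != 0) || (b != 0)) /\ a * x + b * y = 0.
Proof.
have [y0|y0] := eqVneq y 0; first by exists 0, 1; rewrite oner_neq0 orbT y0 mul0r mulr0 addr0.
by exists y, (- x); rewrite y0 mulNr mulrC subrr.
Qed.

Section RealSymmetric.
Variable R : realType.
Local Notation C := R[i].
Local Notation toC := (real_complex R).
Local Open Scope sesquilinear_scope.
Local Notation Re := (@complex.Re R).
Local Notation Im := (@complex.Im R).

Definition quad_form n (A : 'M[R]_n) (x : 'I_n -> R) :=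
  \sum_i \sum_j x i * A i j * x j.

Definition sqnorm n (x : 'I_n -> R) := \sum_i x i ^+ 2.

Lemma sqnorm_ge0 n (x : 'I_n -> R) : 0 <= sqnorm x.
Proof. by apply: sumr_ge0 => i _; apply: sqr_ge0. Qed.

Lemma eq_quad_form n (A : 'M[R]_n) (x y : 'I_n -> R) :
  x =1 y -> quad_form A x = quad_form A y.
Proof. by move=> e; apply: eq_bigr => i _; apply: eq_bigr => j _; rewrite !e. Qed.

Lemma quad_formZ n (A : 'M[R]_n) (b : R) (x : 'I_n -> R) :
  quad_form A (fun i => b * x i) = b ^+ 2 * quad_form A x.
Proof.
rewrite /quad_form mulr_sumr; apply: eq_bigr => i _.
by rewrite mulr_sumr; apply: eq_bigr => j _; ring.
Qed.

Lemma quad_form_diag n (e : 'rV[R]_n) (x : 'I_n -> R) :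
  quad_form (diag_mx e) x = \sum_i e 0 i * x i ^+ 2.
Proof.
apply: eq_bigr => i _; rewrite (bigD1 i) //= big1 => [|j ji].
  by rewrite mxE eqxx mulr1n addr0; ring.
by rewrite mxE eq_sym (negbTE ji) mulr0n mulr0 mul0r.
Qed.

Lemma quad_form1 n (x : 'I_n -> R) : quad_form 1%:M x = sqnorm x.
Proof. by rewrite -diag_const_mx quad_form_diag; apply: eq_bigr => i _; rewrite mxE mul1r. Qed.

Lemma sqnorm_affine n (x : 'I_n -> R) (a b : R) : \sum_i x i = 0 ->
  sqnorm (fun i => a + b * x i) = n%:R * a ^+ 2 + b ^+ 2 * sqnorm x.
Proof.
move=> sx; rewrite /sqnorm.
have -> : \sum_i (a + b * x i) ^+ 2 =
          \sum_i (a ^+ 2 + (2 * a * b) * x i + b ^+ 2 * x i ^+ 2).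
  by apply: eq_bigr => i _; ring.
rewrite !big_split /= -!mulr_sumr sx sumr_const card_ord mulr0 addr0.
by rewrite -mulr_natr; ring.
Qed.

(* The spectral theorem is only available over an algebraically closed field,
   so eigenvectors live in R[i]; a complex vector is tested against a real
   quadratic form through its real and imaginary parts ([cquad_formE]). *)
Definition cquad_form n (B : 'M[R]_n) (u : 'rV[C]_n) :=
  Re ((u *m map_mx toC B *m u^t*) 0 0).

Lemma Re_sum I (r : seq I) (P : pred I) (F : I -> C) :
  Re (\sum_(i <- r | P i) F i) = \sum_(i <- r | P i) Re (F i).
Proof. by apply: big_morph => // [] [? ?] []. Qed.

Lemma Im_sum I (r : seq I) (P : pred I) (F : I -> C) :
  Im (\sum_(i <- r | P i) F i) = \sum_(i <- r | P i) Im (F i).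
Proof. by apply: big_morph => // [] [? ?] []. Qed.

Lemma cquad_formE n (B : 'M[R]_n) (u : 'rV[C]_n) :
  cquad_form B u = quad_form B (fun i => Re (u 0 i)) + quad_form B (fun i => Im (u 0 i)).
Proof.
rewrite /cquad_form mxE Re_sum.
under eq_bigr => j _ do rewrite !mxE mulr_suml Re_sum.
rewrite exchange_big -big_split /=; apply: eq_bigr => i _.
rewrite -big_split /=; apply: eq_bigr => j _.
by rewrite !mxE; case: (u 0 i) => ? ?; case: (u 0 j) => ? ? /=; ring.
Qed.

Definition csq (z : C) := Re z ^+ 2 + Im z ^+ 2.

Lemma csq_ge0 z : 0 <= csq z.
Proof. by rewrite addr_ge0 // sqr_ge0. Qed.

Lemma csq_eq0 z : (csq z == 0) = (z == 0).
Proof.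
case: z => x y; rewrite /csq /= paddr_eq0 ?sqr_ge0 // !sqrf_eq0.
by apply/andP/eqP => [[/eqP -> /eqP ->] | [-> ->]].
Qed.

Lemma csq_gt0 z : (0 < csq z) = (z != 0).
Proof. by rewrite lt_def csq_eq0 csq_ge0 andbT. Qed.

Lemma csq0 : csq 0 = 0.
Proof. by apply/eqP; rewrite csq_eq0. Qed.

Lemma cquad_form_diag n (e : 'rV[R]_n) (w : 'rV[C]_n) :
  cquad_form (diag_mx e) w = \sum_i e 0 i * csq (w 0 i).
Proof. by rewrite cquad_formE !quad_form_diag -big_split; apply: eq_bigr => i _; rewrite mulrDr. Qed.

Lemma cquad_form_mulmx n (A B : 'M[R]_n) (P : 'M[C]_n) (u : 'rV[C]_n) :
  map_mx toC A = P^t* *m map_mx toC B *m P ->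
  cquad_form A u = cquad_form B (u *m P^t*).
Proof.
by move=> eA; rewrite /cquad_form eA trmx_mul map_mxM trmxCK !mulmxA.
Qed.

Lemma cquad_form1 n (w : 'rV[C]_n) : cquad_form 1%:M w = \sum_i csq (w 0 i).
Proof.
by rewrite -diag_const_mx cquad_form_diag; apply: eq_bigr => i _; rewrite mxE mul1r.
Qed.

Lemma cquad_form1_gt0 n (w : 'rV[C]_n) i : w 0 i != 0 -> 0 < cquad_form 1%:M w.
Proof.
move=> w_i; rewrite cquad_form1 (bigD1 i) //=.
have : 0 <= \sum_(j | j != i) csq (w 0 j) by apply: sumr_ge0 => j _; apply: csq_ge0.
have : 0 < csq (w 0 i) by rewrite csq_gt0.
lra.
Qed.

Lemma cquad_form_diag_le n (e : 'rV[R]_n) (w : 'rV[C]_n) (c : R) :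
  (forall i, w 0 i != 0 -> e 0 i <= c) ->
  cquad_form (diag_mx e) w <= c * cquad_form 1%:M w.
Proof.
move=> e_le; rewrite cquad_form_diag cquad_form1 mulr_sumr; apply: ler_sum => i _.
have [-> | w_i] := eqVneq (w 0 i) 0; first by rewrite csq0 !mulr0.
by rewrite ler_wpM2r ?csq_ge0 ?e_le.
Qed.

Lemma cquad_form_diag_ge n (e : 'rV[R]_n) (w : 'rV[C]_n) (c : R) :
  (forall i, w 0 i != 0 -> c <= e 0 i) ->
  c * cquad_form 1%:M w <= cquad_form (diag_mx e) w.
Proof.
move=> e_ge; rewrite cquad_form_diag cquad_form1 mulr_sumr; apply: ler_sum => i _.
have [-> | w_i] := eqVneq (w 0 i) 0; first by rewrite csq0 !mulr0.
by rewrite ler_wpM2r ?csq_ge0 ?e_ge.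
Qed.

Lemma cquad_form1_unitary n (P : 'M[C]_n) (u : 'rV[C]_n) :
  P *m P^t* = 1%:M -> cquad_form 1%:M u = cquad_form 1%:M (u *m P^t*).
Proof.
by move=> PU; apply: cquad_form_mulmx; rewrite map_mx1 mulmx1 mulmx1C.
Qed.

Lemma realsym_spectral n (A : 'M[R]_n) : A^T = A ->
  exists (e : 'rV[R]_n) (P : 'M[C]_n),
    P *m P^t* = 1%:M /\ map_mx toC A = P^t* *m map_mx toC (diag_mx e) *m P.
Proof.
move=> As; set AC := map_mx toC A.
have AC_sym : AC \is symmetricmx.
  by apply/is_hermitianmxP; rewrite expr0 scale1r map_mx_id // /AC map_trmx As.
have AC_real : AC \is a realmx.
  by apply/mxOverP => i j; rewrite mxE; apply/complex_realP; eexists.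
have AC_herm := realsym_hermsym AC_sym AC_real.
have /orthomx_spectralP AC_diag := hermitian_normalmx AC_herm.
have diag_real := hermitian_spectral_diag_real AC_herm.
exists (map_mx Re (spectral_diag AC)), (spectralmx AC); split.
  exact/unitarymxP/spectral_unitarymx.
rewrite -invmx_unitary ?spectral_unitarymx // map_diag_mx.
suff -> : map_mx toC (map_mx Re (spectral_diag AC)) = spectral_diag AC by [].
by apply/rowP => i; rewrite !mxE RRe_real //; move/mxOverP: diag_real; apply.
Qed.

Lemma char_poly_unitary_diag n (A : 'M[R]_n) (e : 'rV[R]_n) (P : 'M[C]_n) :
  P *m P^t* = 1%:M -> map_mx toC A = P^t* *m map_mx toC (diag_mx e) *m P ->
  char_poly A = \prod_i ('X - (e 0 i)%:P).
Proof.
move=> PU eA; apply: (@map_poly_inj _ _ toC).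
rewrite map_char_poly eA char_poly_conj; last exact: mulmx1C.
rewrite map_diag_mx char_poly_trig ?diag_mx_is_trig // rmorph_prod.
by apply: eq_bigr => i _; rewrite rmorphB /= map_polyX map_polyC !mxE eqxx mulr1n.
Qed.

Lemma realsym_sorted_spectrum n (A : 'M[R]_n) : A^T = A -> exists s, sorted_spectrum A s.
Proof.
move=> /realsym_spectral [e [P [PU eA]]].
exists (sort <=%R [seq e 0 i | i <- enum 'I_n]); split.
  exact/sort_sorted/le_total.
rewrite (char_poly_unitary_diag PU eA) (perm_big _ (permEl (perm_sort _ _))) /=.
by rewrite big_map big_enum.
Qed.

Lemma sorted_spectrum_unitary_diag n (A : 'M[R]_n) (s : seq R) :
  A^T = A -> sorted_spectrum A s ->
  exists (e : 'rV[R]_n) (P : 'M[C]_n),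
    [/\ P *m P^t* = 1%:M, map_mx toC A = P^t* *m map_mx toC (diag_mx e) *m P
      & perm_eq s [seq e 0 i | i <- enum 'I_n]].
Proof.
move=> /realsym_spectral [e [P [PU eA]]] [_ charA]; exists e, P; split => //.
apply: prod_XsubC_eq.
by rewrite -charA (char_poly_unitary_diag PU eA) big_map big_enum.
Qed.

Lemma count_perm_card n (f : 'I_n -> R) (s : seq R) (P : pred R) :
  perm_eq s [seq f i | i <- enum 'I_n] -> count P s = #|[pred i | P (f i)]|.
Proof.
move=> /permP ->; rewrite count_map cardE /enum_mem size_filter count_filter.
by apply: eq_count => x; rewrite !inE andbT.
Qed.

Lemma sorted_perm_two_le n (f : 'I_n -> R) (s : seq R) :
  sorted <=%R s -> perm_eq s [seq f i | i <- enum 'I_n] -> (1 < n)%N ->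
  exists i0 i1, [/\ i0 != i1, f i0 <= s`_1 & f i1 <= s`_1].
Proof.
move=> s_sorted s_perm n_gt1.
have s_size : size s = n by rewrite (perm_size s_perm) size_map size_enum_ord.
case: s s_sorted s_perm s_size => [|a [|b t]] /= s_sorted s_perm s_size;
  try by rewrite -s_size in n_gt1.
have : (1 < #|[pred i | (f i <= b)%R]|)%N.
  by rewrite -(count_perm_card (fun x => x <= b) s_perm) /= (andP s_sorted).1 lexx.
by move=> /card_gt1P [i0 [i1 [? ? ?]]]; exists i0, i1.
Qed.

Lemma sorted_perm_ge_but_one n (f : 'I_n -> R) (s : seq R) :
  sorted <=%R s -> perm_eq s [seq f i | i <- enum 'I_n] -> (1 < n)%N ->
  exists i0, forall i, i != i0 -> s`_1 <= f i.
Proof.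
move=> s_sorted s_perm n_gt1.
have s_size : size s = n by rewrite (perm_size s_perm) size_map size_enum_ord.
case: s s_sorted s_perm s_size => [|a [|b t]] /= s_sorted s_perm s_size;
  try by rewrite -s_size in n_gt1.
have below_b : (#|[pred i | (f i < b)%R]| <= 1)%N.
  rewrite -(count_perm_card (fun x => x < b) s_perm) /=.
  have -> : count (fun x => x < b) t = 0%N.
    apply/eqP; rewrite -leqn0 leqNgt -has_count; apply/hasPn => x xt.
    by rewrite -leNgt; apply: (allP (order_path_min le_trans (andP s_sorted).2)).
  by rewrite ltxx addn0; case: (a < b).
case: (pickP [pred i | (f i < b)%R]) => [i0 lt_i0 | none]; last first.
  by exists (Ordinal (ltnW n_gt1)) => i _; rewrite leNgt; move: (none i) => /= ->.
exists i0 => i ne_i; rewrite leNgt; apply/negP => lt_i.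
suff : (1 < #|[pred i | (f i < b)%R]|)%N by rewrite ltnNge below_b.
by apply/card_gt1P; exists i, i0.
Qed.

Lemma lambda2_ge_poincare n (A : 'M[R]_n) (s : seq R) (mu : R) :
  A^T = A -> (1 < n)%N -> sorted_spectrum A s ->
  (forall x : 'I_n -> R, \sum_i x i = 0 -> mu * sqnorm x <= quad_form A x) ->
  mu <= s`_1.
Proof.
move=> A_sym n_gt1 A_spec poincare.
have [e [P [PU eA s_perm]]] := sorted_spectrum_unitary_diag A_sym A_spec.
have [i0 [i1 [ne_i01 e_i0 e_i1]]] := sorted_perm_two_le A_spec.1 s_perm n_gt1.
pose r i := \sum_j P i j.
(* [u] combines the eigenvectors of [e 0 i0], [e 0 i1] <= [s`_1] and is
   orthogonal to the constants. *)
have [a [b [ab_nz ab_r]]] := nontrivial_comb2 (r i0) (r i1).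
pose w : 'rV[C]_n := \row_j (if j == i0 then a else if j == i1 then b else 0).
pose u := w *m P.
have uPt : u *m P^t* = w by rewrite /u -mulmxA PU mulmx1.
have sum_u : \sum_j u 0 j = 0.
  rewrite -[RHS]ab_r /r !mulr_sumr -big_split /=; apply: eq_bigr => j _.
  rewrite !mxE (bigD1 i0) //= (bigD1 i1) 1?eq_sym //= big1 => [|i /andP [ne1 ne0]].
    by rewrite !mxE eqxx eq_sym (negbTE ne_i01) eqxx addr0.
  by rewrite mxE (negbTE ne0) (negbTE ne1) mul0r.
have form_u : mu * cquad_form 1%:M u <= cquad_form A u.
  rewrite !cquad_formE !quad_form1 mulrDr.
  by apply: lerD; apply: poincare; rewrite -?Re_sum -?Im_sum sum_u.
have spec_u : cquad_form A u <= s`_1 * cquad_form 1%:M u.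
  rewrite (cquad_form1_unitary _ PU) (cquad_form_mulmx _ eA) uPt.
  apply: cquad_form_diag_le => j; rewrite mxE.
  have [-> _ | _] := eqVneq j i0; first exact: e_i0.
  have [-> _ | _] := eqVneq j i1; first exact: e_i1.
  by rewrite eqxx.
have norm_pos : 0 < cquad_form 1%:M u.
  rewrite (cquad_form1_unitary _ PU) uPt.
  have [a0 | a_nz] := eqVneq a 0; last by apply: (@cquad_form1_gt0 _ _ i0); rewrite mxE eqxx.
  apply: (@cquad_form1_gt0 _ _ i1); move: ab_nz; rewrite a0 eqxx /=.
  by rewrite mxE eqxx [i1 == i0]eq_sym (negbTE ne_i01).
by rewrite -(ler_pM2r norm_pos) (le_trans form_u) // mulrC.
Qed.

Section AffineRow.
Variables (n : nat) (f : 'I_n -> R) (a b : C).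
Let u : 'rV[C]_n := a *: const_mx 1 + b *: \row_j toC (f j).

Lemma Re_affine_row j : Re (u 0 j) = Re a + Re b * f j.
Proof. by rewrite !mxE mulr1; case: (a) (b) => ? ? [? ?] /=; ring. Qed.

Lemma Im_affine_row j : Im (u 0 j) = Im a + Im b * f j.
Proof. by rewrite !mxE mulr1; case: (a) (b) => ? ? [? ?] /=; ring. Qed.

Lemma cquad_form_affine (A : 'M[R]_n) :
  (forall (x : 'I_n -> R) (t : R), quad_form A (fun i => t + x i) = quad_form A x) ->
  cquad_form A u = csq b * quad_form A f.
Proof.
move=> A_shift; rewrite cquad_formE (eq_quad_form _ Re_affine_row).
rewrite (eq_quad_form _ Im_affine_row) !(A_shift (fun j => _ * f j)) !quad_formZ.
by rewrite -mulrDl.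
Qed.

Lemma cquad_form1_affine : \sum_i f i = 0 ->
  cquad_form 1%:M u = n%:R * csq a + csq b * sqnorm f.
Proof.
move=> sum_f; rewrite cquad_formE (eq_quad_form _ Re_affine_row).
rewrite (eq_quad_form _ Im_affine_row) !quad_form1 !sqnorm_affine //.
by rewrite /csq; ring.
Qed.

End AffineRow.

Lemma lambda2_le_rayleigh n (A : 'M[R]_n) (s : seq R) (f : 'I_n -> R) (c : R) :
  A^T = A -> (1 < n)%N -> sorted_spectrum A s ->
  (forall (x : 'I_n -> R) (a : R), quad_form A (fun i => a + x i) = quad_form A x) ->
  0 <= c -> \sum_i f i = 0 -> 0 < sqnorm f -> quad_form A f <= c * sqnorm f ->
  s`_1 <= c.
Proof.
move=> A_sym n_gt1 A_spec A_shift c_ge0 sum_f f_pos f_rayleigh.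
have [e [P [PU eA s_perm]]] := sorted_spectrum_unitary_diag A_sym A_spec.
have [i0 e_ge] := sorted_perm_ge_but_one A_spec.1 s_perm n_gt1.
pose one : 'rV[C]_n := const_mx 1.
pose fC : 'rV[C]_n := \row_j toC (f j).
(* [u] lies in the span of the constants and [f] and is orthogonal to the
   eigenvector of the one eigenvalue that may lie below [s`_1]. *)
have [a [b [ab_nz ab_w]]] := nontrivial_comb2 ((one *m P^t*) 0 i0) ((fC *m P^t*) 0 i0).
pose u := a *: one + b *: fC.
have form_u : cquad_form A u = csq b * quad_form A f := cquad_form_affine f a b A_shift.
have norm_u : cquad_form 1%:M u = n%:R * csq a + csq b * sqnorm f :=
  cquad_form1_affine a b sum_f.
have w_i0 : (u *m P^t*) 0 i0 = 0.
  by move: ab_w; rewrite /u mulmxDl -!scalemxAl !mxE.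
have spec_u : s`_1 * cquad_form 1%:M u <= cquad_form A u.
  rewrite (cquad_form1_unitary _ PU) (cquad_form_mulmx _ eA).
  apply: cquad_form_diag_ge => j; have [-> | /e_ge //] := eqVneq j i0.
  by rewrite w_i0 eqxx.
have norm_pos : 0 < cquad_form 1%:M u.
  rewrite norm_u; case/orP: ab_nz => nz.
    apply: ltr_wpDr; first by rewrite mulr_ge0 ?csq_ge0 ?sqnorm_ge0.
    by rewrite mulr_gt0 ?csq_gt0 // ltr0n ltnW.
  apply: ltr_wpDl; first by rewrite mulr_ge0 ?csq_ge0.
  by rewrite mulr_gt0 ?csq_gt0.
rewrite -(ler_pM2r norm_pos) (le_trans spec_u) // form_u norm_u mulrDr.
rewrite [c * (csq b * _)]mulrCA ler_wpDl ?mulr_ge0 ?csq_ge0 //.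
by rewrite ler_wpM2l ?csq_ge0.
Qed.
End RealSymmetric.

Section Laplacian.
Variable R : realType.

Definition laplacian n (adj : rel 'I_n) : 'M[R]_n :=
  \matrix_(i, j) (if i == j then #|[set j | adj i j]|%:R else if adj i j then -1 else 0).

Lemma laplacian_row n (adj : rel 'I_n) (x : 'I_n -> R) i : irreflexive adj ->
  \sum_j x i * laplacian adj i j * x j =
  \sum_j (if adj i j then x i ^+ 2 - x i * x j else 0).
Proof.
move=> adj_irr.
have deg : #|[set j | adj i j]|%:R = \sum_(j | j != i) (if adj i j then 1 else 0) :> R.
  rewrite -sumr_const big_mkcond (bigD1 i) //= inE adj_irr add0r.
  by apply: eq_bigr => j _; rewrite inE.
rewrite (bigD1 i) //= [RHS](bigD1 i) //= mxE eqxx adj_irr add0r deg mulr_sumr mulr_suml.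
rewrite -big_split /=; apply: eq_bigr => j ne_ji.
by rewrite mxE eq_sym (negbTE ne_ji); case: (adj i j); ring.
Qed.

Lemma quad_form_laplacian n (adj : rel 'I_n) (x : 'I_n -> R) :
  irreflexive adj -> symmetric adj ->
  2 * quad_form (laplacian adj) x = \sum_i \sum_j (if adj i j then (x i - x j) ^+ 2 else 0).
Proof.
move=> adj_irr adj_sym; rewrite /quad_form.
under eq_bigr => i _ do rewrite laplacian_row //.
rewrite mulr_natl mulr2n [X in _ + X]exchange_big -big_split /=.
apply: eq_bigr => i _; rewrite -big_split /=; apply: eq_bigr => j _.
by rewrite (adj_sym j i); case: (adj i j); rewrite ?addr0 //; ring.
Qed.

Lemma sum_parent_edges n (leg : pred 'I_n) (par : 'I_n -> 'I_n) (F : 'I_n -> 'I_n -> R) :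
  \sum_i \sum_j (if leg i && (j == par i) then F i j else 0) = \sum_(i | leg i) F i (par i).
Proof.
rewrite [RHS]big_mkcond; apply: eq_bigr => i _.
case: (leg i) => /=; last by rewrite big1.
by rewrite -big_mkcond big_pred1_eq.
Qed.

Lemma quad_form_laplacian_parent n (adj : rel 'I_n) (leg : pred 'I_n)
    (par : 'I_n -> 'I_n) (x : 'I_n -> R) :
  (forall i j, adj i j = (leg i && (j == par i)) || (leg j && (i == par j))) ->
  (forall i, leg i -> par i != i) ->
  (forall i, leg i -> leg (par i) -> par (par i) != i) ->
  quad_form (laplacian adj) x = \sum_(i | leg i) (x i - x (par i)) ^+ 2.
Proof.
move=> adjE par_neq no_2cycle.
have adj_irr : irreflexive adj.
  move=> i; rewrite adjE orbb; case: (boolP (leg i)) => //= leg_i.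
  by apply/negbTE; rewrite eq_sym par_neq.
have adj_sym : symmetric adj by move=> i j; rewrite !adjE orbC.
have adj_split i j : (if adj i j then (x i - x j) ^+ 2 else 0) =
    (if leg i && (j == par i) then (x i - x j) ^+ 2 else 0) +
    (if leg j && (i == par j) then (x i - x j) ^+ 2 else 0).
  rewrite adjE; case: (boolP (leg i && _)) => [/andP [leg_i /eqP ->] | _] /=.
    case: (boolP (leg _ && _)) => [/andP [leg_pi /eqP eq_i] | _]; last by rewrite addr0.
    by move: (no_2cycle i leg_i leg_pi); rewrite -eq_i eqxx.
  by rewrite add0r.
apply: (@mulfI _ 2); first by rewrite pnatr_eq0.
rewrite quad_form_laplacian //.
under eq_bigr => i _ do under eq_bigr => j _ do rewrite adj_split.
under eq_bigr => i _ do rewrite big_split.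
rewrite big_split /= sum_parent_edges exchange_big /= sum_parent_edges.
under [X in _ + X]eq_bigr => i _ do rewrite -opprB sqrrN.
by rewrite mulr_natl mulr2n.
Qed.

End Laplacian.

Section Octopus.
Variable R : realType.

Lemma octo_laplacian_sym k d :
  (octo_laplacian R k d)^T = octo_laplacian R k d.
Proof.
apply/matrixP => i j; rewrite !mxE; case: eqVneq => [-> // | _].
by rewrite /octo_adj orbC.
Qed.

Lemma octo_quad_form k' d (x : 'I_k'.+1 -> R) : (0 < d)%N ->
  quad_form (octo_laplacian R k'.+1 d) x =
  \sum_(0 <= i < k') (x (inord i) - x (inord (octo_parent k' d i))) ^+ 2.
Proof.
move=> d_gt0.
have parentE (i : 'I_k'.+1) : val (inord (octo_parent k' d i) : 'I_k'.+1) = octo_parent k' d i.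
  by rewrite /= inordK // ltnS octo_parent_le // -ltnS.
rewrite (@quad_form_laplacian_parent _ _ _ (fun i : 'I_k'.+1 => (i < k')%N)
          (fun i => inord (octo_parent k' d i))) => [|i j|i|i].
- rewrite big_mkcond big_ord_recr /= ltnn addr0 big_mkord; apply: eq_bigr => i _.
  have -> : widen_ord (leqnSn k') i = inord i by apply: val_inj; rewrite /= inordK // ltnS ltnW.
  by rewrite /= ltn_ord.
- by rewrite octo_adjE // -!val_eqE !parentE.
- by rewrite -val_eqE parentE; apply: octo_parent_neq.
- rewrite -val_eqE !parentE => lt_i lt_pi.
  by rewrite /= inordK ?octo_parent_no_2cycle // ltnS octo_parent_le // ltnW.
Qed.

Lemma sum_inord n (F : 'I_n.+1 -> R) : \sum_i F i = \sum_(0 <= i < n.+1) F (inord i).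
Proof. by rewrite big_mkord; apply: eq_bigr => i _; rewrite inord_val. Qed.

Lemma sum_blocks (g : nat -> R) m d :
  \sum_(0 <= i < m * d) g i = \sum_(0 <= l < m) \sum_(0 <= p < d) g (l * d + p)%N.
Proof.
elim: m => [|m IH]; first by rewrite mul0n !big_geq.
rewrite mulSnr (big_cat_nat _ (n := (m * d)%N)) ?leq_addr // IH big_nat_recr //=.
congr (_ + _); rewrite -{1}[(m * d)%N]add0n big_addn addKn.
by apply: eq_bigr => p _; rewrite addnC.
Qed.

Lemma sqr_sum_le (a : nat -> R) m :
  (\sum_(0 <= q < m) a q) ^+ 2 <= m%:R * \sum_(0 <= q < m) a q ^+ 2.
Proof.
elim: m => [|m IH]; first by rewrite !big_geq // expr0n /= mul0r.
rewrite !big_nat_recr //=.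
set S := \sum_(0 <= q < m) a q in IH *; set T := \sum_(0 <= q < m) a q ^+ 2 in IH *.
have T_ge0 : 0 <= T by apply: sumr_ge0 => i _; apply: sqr_ge0.
have [m0 | m_gt0] := posnP m.
  by rewrite /S /T m0 !big_geq // !add0r mul1r.
have : 0 < m%:R :> R by rewrite ltr0n.
have := sqr_ge0 (S - m%:R * a m).
rewrite mulrSr; nra.
Qed.

Lemma path_poincare (z : nat -> R) d : z 0%N = 0 ->
  \sum_(0 <= p < d) z p.+1 ^+ 2 <= d%:R ^+ 2 * \sum_(0 <= p < d) (z p.+1 - z p) ^+ 2.
Proof.
move=> z0; set S := \sum_(0 <= p < d) (z p.+1 - z p) ^+ 2.
have partial_le p : (p <= d)%N -> \sum_(0 <= q < p) (z q.+1 - z q) ^+ 2 <= S.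
  move=> le_pd; rewrite /S [X in _ <= X](big_cat_nat _ (n := p)) //= lerDl.
  by apply: sumr_ge0 => q _; apply: sqr_ge0.
have term p : (p < d)%N -> z p.+1 ^+ 2 <= d%:R * S.
  move=> lt_pd; rewrite -[z p.+1]subr0 -z0 -telescope_sumr //.
  apply: le_trans (sqr_sum_le _ _) _; apply: ler_pM; rewrite ?ler0n ?ler_nat //.
  by apply: sumr_ge0 => q _; apply: sqr_ge0.
  exact: partial_le.
apply: le_trans (ler_sum_nat (fun p lt_pd => term p (andP lt_pd).2)) _.
by rewrite sumr_const_nat subn0 -mulr_natr expr2; lra.
Qed.

Lemma octo_poincare m d (x : 'I_(m * d).+1 -> R) : (0 < d)%N -> \sum_i x i = 0 ->
  sqnorm x <= d%:R ^+ 2 * quad_form (octo_laplacian R (m * d).+1 d) x.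
Proof.
move=> d_gt0 sum_x; set k' := (m * d)%N.
pose X i := x (inord i); pose c := X k'.
have centre : sqnorm x <= \sum_(0 <= i < k') (X i - c) ^+ 2.
  suff <- : sqnorm (fun i => - c + 1 * x i) = \sum_(0 <= i < k') (X i - c) ^+ 2.
    by rewrite sqnorm_affine // expr1n mul1r lerDr mulr_ge0 ?sqr_ge0.
  rewrite /sqnorm sum_inord big_nat_recr //= mul1r -/(X k') -/c addNr expr0n addr0.
  by apply: eq_big_nat => i _; rewrite mul1r addrC.
rewrite octo_quad_form // sum_blocks mulr_sumr; apply: le_trans centre _.
rewrite /k' sum_blocks; apply: ler_sum_nat => l _.
pose z p := if p is p'.+1 then X (l * d + p')%N - c else 0.
have := @path_poincare z d erefl.
suff -> : \sum_(0 <= p < d) (z p.+1 - z p) ^+ 2 = \sum_(0 <= p < d)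
    (x (inord (l * d + p)) - x (inord (octo_parent (m * d) d (l * d + p)))) ^+ 2 by [].
apply: eq_big_nat => p /andP [_ lt_pd].
rewrite octo_parent_leg //; case: p lt_pd => [|p] _ /=; first by rewrite addn0 subr0.
by rewrite addnS; congr (_ ^+ 2); rewrite /z /X; ring.
Qed.

Lemma octo_quad_form_shift k' d (x : 'I_k'.+1 -> R) (a : R) : (0 < d)%N ->
  quad_form (octo_laplacian R k'.+1 d) (fun i => a + x i) =
  quad_form (octo_laplacian R k'.+1 d) x.
Proof.
by move=> d_gt0; rewrite !octo_quad_form //; apply: eq_bigr => i _; rewrite opprD addrACA subrr add0r.
Qed.

Lemma sum_center n (y : 'I_n.+1 -> R) : \sum_i (y i - (\sum_j y j) / n.+1%:R) = 0.
Proof.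
by rewrite sumrB sumr_const card_ord -(mulr_natr ((\sum_j y j) / _)) divfK ?subrr ?pnatr_eq0.
Qed.

Lemma sqnorm_center n (y : 'I_n.+1 -> R) :
  sqnorm (fun i => y i - (\sum_j y j) / n.+1%:R) =
  sqnorm y - n.+1%:R * ((\sum_j y j) / n.+1%:R) ^+ 2.
Proof.
set mean := (\sum_j y j) / n.+1%:R.
have := sqnorm_affine mean 1 (sum_center y); rewrite expr1n mul1r.
have -> : sqnorm (fun i => mean + 1 * (y i - mean)) = sqnorm y.
  by apply: eq_bigr => i _; rewrite mul1r addrC subrK.
by move=> ->; ring.
Qed.

Definition leg_distance d (i : nat) : R := if (i < d)%N then i.+1%:R else 0.

Lemma sum_leg_distance k' d (F : R -> R) : F 0 = 0 -> (d <= k')%N ->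
  \sum_(i < k'.+1) F (leg_distance d i) = \sum_(0 <= i < d) F i.+1%:R.
Proof.
move=> F0 le_dk; rewrite -(big_mkord xpredT (fun i => F (leg_distance d i))).
rewrite (big_cat_nat _ (n := d)) //= ?leqW // [X in _ + X]big_nat_cond.
rewrite [X in _ + X]big1 ?addr0 => [|i /andP [/andP [le_di _] _]]; last first.
  by rewrite /leg_distance ltnNge le_di.
by apply: eq_big_nat => i /andP [_ lt_id]; rewrite /leg_distance lt_id.
Qed.

Lemma sum_nat_succ d : 2 * \sum_(0 <= i < d) i.+1%:R = d%:R * (d%:R + 1) :> R.
Proof.
elim: d => [|d IH]; first by rewrite big_geq // mulr0 mul0r.
by rewrite big_nat_recr //= mulrDr IH -natr1; ring.
Qed.

Lemma sum_sqr_nat_succ d :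
  6 * \sum_(0 <= i < d) i.+1%:R ^+ 2 = d%:R * (d%:R + 1) * (2 * d%:R + 1) :> R.
Proof.
elim: d => [|d IH]; first by rewrite big_geq // mulr0 !mul0r.
by rewrite big_nat_recr //= mulrDr IH -natr1; ring.
Qed.

Lemma octo_quad_form_leg_distance m d : (0 < d)%N -> (0 < m)%N ->
  quad_form (octo_laplacian R (m * d).+1 d) (fun i => leg_distance d i) = d%:R.
Proof.
move=> d_gt0 m_gt0; set k' := (m * d)%N.
have le_dk : (d <= k')%N by rewrite /k' leq_pmull.
rewrite octo_quad_form // (big_cat_nat _ (n := d)) //=.
rewrite [X in _ + X]big_nat_cond [X in _ + X]big1 ?addr0 => [|i /andP [/andP [le_di lt_ik] _]].
  have -> : d%:R = \sum_(0 <= i < d) (1 : R) by rewrite sumr_const_nat subn0.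
  apply: eq_big_nat => i /andP [_ lt_id]; rewrite !inordK ?ltnS ?octo_parent_le //.
    rewrite /leg_distance /octo_parent lt_id modn_small //.
    case: i lt_id => [|i] lt_id /=; first by rewrite ltnNge le_dk subr0 expr1n.
    by rewrite ltnW // -natr1 addrC addKr expr1n.
  1-2: exact: leq_trans (ltnW lt_id) le_dk.
have le_ik : (i <= k')%N by rewrite ltnW.
have le_dpi : (d <= octo_parent k' d i)%N.
  rewrite /octo_parent; case: ifP => [_ | /negbT nz]; first exact: le_dk.
  have : i != d by apply: contraNneq nz => ->; rewrite modnn.
  lia.
rewrite !inordK ?ltnS ?octo_parent_le // /leg_distance !ltnNge le_di le_dpi /=.
by rewrite subrr expr0n.
Qed.

Lemma centered_moments_bound (D N S1 S2 : R) : 1 <= D -> D + 1 <= N ->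
  2 * S1 = D * (D + 1) -> 6 * S2 = D * (D + 1) * (2 * D + 1) ->
  D ^+ 3 <= 12 * (S2 - N * (S1 / N) ^+ 2).
Proof.
move=> D_ge1 N_ge eS1 eS2; have N_gt0 : 0 < N by lra.
have -> : N * (S1 / N) ^+ 2 = S1 ^+ 2 / N by field; rewrite gt_eqF.
have : S1 ^+ 2 / N <= D ^+ 2 * (D + 1) / 4.
  rewrite ler_pdivrMr // (_ : S1 = D * (D + 1) / 2); last by rewrite -eS1; field.
  have : D ^+ 2 * (D + 1) * (D + 1) <= D ^+ 2 * (D + 1) * N.
    by rewrite ler_wpM2l // mulr_ge0 ?sqr_ge0 //; lra.
  lra.
have : 0 <= D ^+ 2 by rewrite sqr_ge0.
lra.
Qed.

Lemma octo_rayleigh_test m d : (0 < d)%N -> (0 < m)%N ->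
  exists f : 'I_(m * d).+1 -> R,
    [/\ \sum_i f i = 0, 0 < sqnorm f &
        quad_form (octo_laplacian R (m * d).+1 d) f <= 12 / d%:R ^+ 2 * sqnorm f].
Proof.
move=> d_gt0 m_gt0; set k' := (m * d)%N.
have le_dk : (d <= k')%N by rewrite /k' leq_pmull.
pose A1 := \sum_(i < k'.+1) leg_distance d i.
have eA1 : 2 * A1 = d%:R * (d%:R + 1).
  by rewrite -sum_nat_succ -(@sum_leg_distance k' d id).
have eA2 : 6 * sqnorm (fun i : 'I_k'.+1 => leg_distance d i) =
           d%:R * (d%:R + 1) * (2 * d%:R + 1).
  by rewrite -sum_sqr_nat_succ -(@sum_leg_distance k' d (fun t => t ^+ 2)) ?expr0n.
have norm_ge :
    d%:R ^+ 3 <= 12 * sqnorm (fun i : 'I_k'.+1 => leg_distance d i - A1 / k'.+1%:R).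
  have := sqnorm_center (fun i : 'I_k'.+1 => leg_distance d i); rewrite -/A1 => ->.
  apply: centered_moments_bound eA1 eA2; first by rewrite ler1n.
  by rewrite -natr1 lerD2r ler_nat.
exists (fun i => leg_distance d i - A1 / k'.+1%:R); split; first exact: sum_center.
  have : 0 < d%:R ^+ 3 :> R by rewrite exprn_gt0 // ltr0n.
  lra.
rewrite (eq_quad_form _ (fun i => addrC _ _)) octo_quad_form_shift //.
by rewrite octo_quad_form_leg_distance // mulrAC ler_pdivlMr ?exprn_gt0 ?ltr0n.
Qed.

End Octopus.

Theorem lemma5 (R : realType) :
  exists c c' : R, 0 < c /\ 0 < c' /\
    forall d k : nat, (1 <= d)%N -> (2 <= k)%N -> (d %| k.-1)%N ->
      (exists s, sorted_spectrum (octo_laplacian R k d) s) /\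
      (forall s, sorted_spectrum (octo_laplacian R k d) s ->
         c / (d%:R ^+ 2) <= s`_1 <= c' / (d%:R ^+ 2)).
Proof.
exists 1, 12; split; first exact: ltr01.
split; first by rewrite ltr0n.
move=> d [//|k'] d_gt0 k_ge2 /dvdnP [m /= k'E]; subst k'.
have m_gt0 : (0 < m)%N by case: m k_ge2.
have L_sym := octo_laplacian_sym R (m * d).+1 d.
split => [|s L_spec]; first exact: realsym_sorted_spectrum.
have d2_gt0 : 0 < d%:R ^+ 2 :> R by rewrite exprn_gt0 // ltr0n.
apply/andP; split.
  apply: (lambda2_ge_poincare L_sym k_ge2 L_spec) => x sum_x.
  by rewrite div1r -(ler_pM2l d2_gt0) mulrA mulrV ?unitfE ?gt_eqF // mul1r octo_poincare.
have [f [sum_f f_pos f_rayleigh]] := octo_rayleigh_test R d_gt0 m_gt0.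
apply: (lambda2_le_rayleigh L_sym k_ge2 L_spec _ _ sum_f f_pos f_rayleigh).
  by move=> x a; apply: octo_quad_form_shift.
by rewrite divr_ge0 // ltW.
Qed.
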